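(* Let $C\subset\mathbb{R}^p$ be a closed convex pointed cone containing $0$ with nonempty interior such that $P\subset\mathrm{int}(C)\cup\{0\}$. If $K\in\mathcal{K}(C,P)$, then $\mathcal{E}(K,P)=\mathcal{PE}(K,P)$.
   Context: $P\subset\mathbb{R}^p$ is a closed convex pointed cone containing $0$ with nonempty interior. For nonempty $S\subset\mathbb{R}^p$ and such a cone $Q$, $\mathcal{E}(S,Q)=\{y\in S:(y-Q)\cap S=\{y\}\}$. Contingent cone of $S$ at $y\in S$: $T_S(y)=\{v:\exists h_k\to0^+,\exists v_k\to v,y+h_kv_k\in S\}$. Properly minimal elements: $\mathcal{PE}(S,P)=\{y\in\mathcal{E}(S,P): T_{S+P}(y)\cap(-P)=\{0\}\}$. $\mathcal{K}(C,P)$ is the set of nonempty compact $K\subset\mathbb{R}^p$ with $\mathcal{E}(K,P)=\mathcal{E}(K,C)$. *)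

From Stdlib Require Import Reals Classical FunctionalExtensionality.
From Stdlib Require Vectors.Fin.
Open Scope R_scope.

Definition vec (p : nat) : Type := Fin.t p -> R.

Definition vadd {p} (x y : vec p) : vec p := fun i => x i + y i.
Definition vsub {p} (x y : vec p) : vec p := fun i => x i - y i.
Definition vscal {p} (a : R) (x : vec p) : vec p := fun i => a * x i.
Definition vzero {p} : vec p := fun _ => 0.

Fixpoint fsum (p : nat) : (Fin.t p -> R) -> R :=
  match p return (Fin.t p -> R) -> R with
  | O => fun _ => 0
  | S n => fun f => f Fin.F1 + fsum n (fun i => f (Fin.FS i))
  end.

Definition vnorm {p} (x : vec p) : R := sqrt (fsum p (fun i => x i * x i)).

Definition set (p : nat) := vec p -> Prop.

Definition is_open {p} (S : set p) : Prop :=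
  forall x, S x -> exists e, e > 0 /\ forall y, vnorm (vsub y x) < e -> S y.
Definition is_closed {p} (S : set p) : Prop :=
  is_open (fun x => ~ S x).
Definition bounded {p} (S : set p) : Prop :=
  exists M, forall x, S x -> vnorm x <= M.
(* Heine-Borel: compact = closed and bounded in R^p *)
Definition is_compact {p} (S : set p) : Prop := is_closed S /\ bounded S.
Definition nonempty {p} (S : set p) : Prop := exists x, S x.

Definition vinterior {p} (S : set p) : set p :=
  fun x => exists e, e > 0 /\ forall y, vnorm (vsub y x) < e -> S y.

Definition is_convex {p} (S : set p) : Prop :=
  forall x y t, S x -> S y -> 0 <= t <= 1 ->
    S (vadd (vscal t x) (vscal (1 - t) y)).
Definition is_cone {p} (S : set p) : Prop :=
  forall x t, S x -> 0 <= t -> S (vscal t x).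
Definition pointed {p} (S : set p) : Prop :=
  forall x, S x -> S (vscal (-1) x) -> x = vzero.

Definition good_cone {p} (Q : set p) : Prop :=
  is_closed Q /\ is_convex Q /\ is_cone Q /\ pointed Q /\ Q vzero /\
  nonempty (vinterior Q).

Definition minimal_set {p} (S Q : set p) : set p :=
  fun y => S y /\
    forall z, (S z /\ exists q, Q q /\ z = vsub y q) <-> z = y.

Definition msum {p} (S Q : set p) : set p :=
  fun z => exists s q, S s /\ Q q /\ z = vadd s q.

Definition seq_cv {p} (u : nat -> vec p) (l : vec p) : Prop :=
  forall e, e > 0 -> exists N, forall n, (n >= N)%nat -> vnorm (vsub (u n) l) < e.

Definition contingent {p} (S : set p) (y : vec p) : set p :=
  fun v => exists (h : nat -> R) (w : nat -> vec p),
    (forall k, h k > 0) /\ Un_cv h 0 /\ seq_cv w v /\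
    forall k, S (vadd y (vscal (h k) (w k))).

Definition proper_minimal_set {p} (S P : set p) : set p :=
  fun y => minimal_set S P y /\
    forall v, (contingent (msum S P) y v /\ P (vscal (-1) v)) <-> v = vzero.

Definition Kfam {p} (C P : set p) (K : set p) : Prop :=
  nonempty K /\ is_compact K /\
  forall y, minimal_set K P y <-> minimal_set K C y.

From Stdlib Require Import Reals.
From Stdlib Require Import ZArith Lra Lia FunctionalExtensionality.
From Stdlib Require Vectors.Fin.
Open Scope R_scope.

(* Let y be P-minimal in K.  Since K belongs to K(C,P), y is also
   C-minimal.  Take v in the contingent cone T_{K+P}(y) with -v in P; we show
   v = 0.  If -v <> 0 then -v lies in int(C), so the approximating directions
   w_k -> v eventually satisfy -w_k in C.  Writing y + h_k w_k = s + q with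
   s in K, q in P, we get y - s = h_k (-w_k) + q in C (P is inside C and C is
   a convex cone), so C-minimality forces s = y; then q = h_k w_k lies in C
   together with its opposite, and pointedness of C gives w_k = 0.  Hence the
   w_k are eventually 0 and their limit v is 0.  The converse inclusion
   0 in T_{K+P}(y) ∩ (-P) is immediate. *)

Ltac vec_ext := apply functional_extensionality; intro;
  unfold vadd, vsub, vscal, vzero.

Lemma fsum_nonneg (p : nat) (f : Fin.t p -> R) :
  (forall i, 0 <= f i) -> 0 <= fsum p f.
Proof.
  revert f; induction p as [|n IH]; intros f Hf; simpl; [lra|].
  pose proof (Hf Fin.F1). pose proof (IH (fun i => f (Fin.FS i)) (fun i => Hf _)). lra.
Qed.

Lemma fsum_zero_each (p : nat) (f : Fin.t p -> R) :
  (forall i, 0 <= f i) -> fsum p f = 0 -> forall i, f i = 0.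
Proof.
  revert f; induction p as [|n IH]; intros f Hf Hsum i.
  - inversion i.
  - simpl in Hsum.
    pose proof (Hf Fin.F1).
    pose proof (fsum_nonneg n (fun i => f (Fin.FS i)) (fun i => Hf _)).
    pattern i; apply Fin.caseS'.
    + lra.
    + intro j. apply (IH (fun i => f (Fin.FS i)) (fun i => Hf _)). lra.
Qed.

Lemma fsum_zero (p : nat) : fsum p (fun _ => 0) = 0.
Proof. induction p; simpl; [lra | rewrite IHp; lra]. Qed.

Lemma vnorm_self {p} (x : vec p) : vnorm (vsub x x) = 0.
Proof.
  unfold vnorm, vsub.
  replace (fun i : Fin.t p => (x i - x i) * (x i - x i)) with (fun _ : Fin.t p => 0)
    by (apply functional_extensionality; intro; ring).
  rewrite fsum_zero. apply sqrt_0.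
Qed.

Lemma vnorm_opp {p} (x : vec p) : vnorm (vscal (-1) x) = vnorm x.
Proof.
  unfold vnorm, vscal. do 2 f_equal.
  apply functional_extensionality; intro; ring.
Qed.

Lemma vnorm_small_zero {p} (u : vec p) :
  (forall e, e > 0 -> vnorm u < e) -> u = vzero.
Proof.
  intro Hsmall.
  set (s := fsum p (fun i => u i * u i)).
  assert (Hs : 0 <= s) by (apply fsum_nonneg; intro; apply Rle_0_sqr).
  assert (Hsqrt : sqrt s = 0).
  { destruct (Rle_lt_or_eq_dec 0 (sqrt s) (sqrt_pos s)) as [Hpos|Hzero]; [|auto].
    specialize (Hsmall _ Hpos). unfold vnorm in Hsmall. fold s in Hsmall. lra. }
  apply sqrt_eq_0 in Hsqrt; [|exact Hs].
  vec_ext. rename x into i.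
  pose proof (fsum_zero_each p (fun i => u i * u i) (fun i => Rle_0_sqr _) Hsqrt i) as Hi.
  simpl in Hi. destruct (Rmult_integral _ _ Hi); auto.
Qed.

Lemma seq_cv_eventually_zero {p} (w : nat -> vec p) (v : vec p) :
  seq_cv w v -> (exists N, forall k, (k >= N)%nat -> w k = vzero) -> v = vzero.
Proof.
  intros Hcv [N HN].
  assert (Hv : vsub vzero v = vzero).
  { apply vnorm_small_zero. intros e He.
    destruct (Hcv e He) as [M HM].
    rewrite <- (HN (max N M)) by lia. apply HM; lia. }
  vec_ext. pose proof (equal_f Hv x) as Hx. unfold vsub, vzero in Hx. lra.
Qed.

Lemma inv_succ_cv : Un_cv (fun k => / (INR k + 1)) 0.
Proof.
  intros e He.
  destruct (archimed (/ e)) as [Hup _].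
  assert (Hz : (0 <= up (/ e))%Z).
  { apply le_IZR. pose proof (Rinv_0_lt_compat e He). lra. }
  exists (Z.to_nat (up (/ e))). intros n Hn.
  unfold Rdist. rewrite Rminus_0_r.
  assert (HI : 0 < INR n + 1) by (pose proof (pos_INR n); lra).
  rewrite Rabs_right by (left; apply Rinv_0_lt_compat; lra).
  apply le_INR in Hn. rewrite INR_IZR_INZ, Z2Nat.id in Hn by auto.
  apply (Rmult_lt_reg_l (INR n + 1)); [lra|].
  rewrite Rinv_r by lra.
  apply (Rmult_lt_reg_l (/ e)); [apply Rinv_0_lt_compat; lra|].
  replace (/ e * ((INR n + 1) * e)) with (INR n + 1) by (field; lra).
  lra.
Qed.

Lemma contingent_zero {p} (S : set p) (y : vec p) :
  S y -> contingent S y vzero.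
Proof.
  intro Hy. exists (fun k => / (INR k + 1)), (fun _ => vzero).
  split; [|split; [|split]].
  - intro k. apply Rinv_0_lt_compat. pose proof (pos_INR k); lra.
  - apply inv_succ_cv.
  - intros e He. exists O. intros. rewrite vnorm_self. lra.
  - intro k. replace (vadd y (vscal (/ (INR k + 1)) vzero)) with y; auto.
    vec_ext; ring.
Qed.

Lemma cone_add {p} (C : set p) : is_convex C -> is_cone C ->
  forall a b, C a -> C b -> C (vadd a b).
Proof.
  intros Hcv Hco a b Ha Hb.
  pose proof (Hco _ 2 (Hcv a b (1/2) Ha Hb ltac:(lra)) ltac:(lra)) as H.
  replace (vadd a b) with (vscal 2 (vadd (vscal (1 / 2) a) (vscal (1 - 1 / 2) b))); auto.
  vec_ext; field.
Qed.

Lemma vinterior_sub {p} (S : set p) (x : vec p) : vinterior S x -> S x.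
Proof. intros [e [He Hball]]. apply Hball. rewrite vnorm_self. lra. Qed.

Lemma interior_eventually_opp {p} (C : set p) (w : nat -> vec p) (v : vec p) :
  vinterior C (vscal (-1) v) -> seq_cv w v ->
  exists N, forall k, (k >= N)%nat -> C (vscal (-1) (w k)).
Proof.
  intros [e [He Hball]] Hcv.
  destruct (Hcv e He) as [N HN]. exists N. intros k Hk. apply Hball.
  replace (vsub (vscal (-1) (w k)) (vscal (-1) v)) with (vscal (-1) (vsub (w k) v))
    by (vec_ext; ring).
  rewrite vnorm_opp. auto.
Qed.

Lemma no_cone_descent {p} (K C : set p) (y s q w : vec p) (h : R) :
  is_convex C -> is_cone C -> pointed C ->
  minimal_set K C y -> K s -> C q -> h > 0 -> C (vscal (-1) w) ->
  vadd y (vscal h w) = vadd s q -> w = vzero.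
Proof.
  intros Ccv Cco Cpt [_ Hmin] Ks Cq Hh Cw Heq.
  assert (Heqi : forall i, y i + h * w i = s i + q i).
  { intro i. pose proof (equal_f Heq i) as E. unfold vadd, vscal in E. exact E. }
  assert (Chw : C (vscal h (vscal (-1) w))) by (apply Cco; auto; lra).
  assert (Cys : C (vsub y s)).
  { replace (vsub y s) with (vadd (vscal h (vscal (-1) w)) q).
    - apply cone_add; auto.
    - vec_ext. pose proof (Heqi x). lra. }
  assert (Hsy : s = y).
  { apply (Hmin s). split; auto. exists (vsub y s). split; auto. vec_ext; ring. }
  subst s.
  assert (Hhw : vscal h w = vzero).
  { apply Cpt.
    - replace (vscal h w) with q; auto. vec_ext. pose proof (Heqi x). lra.
    - replace (vscal (-1) (vscal h w)) with (vscal h (vscal (-1) w)); auto.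
      vec_ext; ring. }
  vec_ext. pose proof (equal_f Hhw x) as Hx. unfold vscal, vzero in Hx.
  destruct (Rmult_integral _ _ Hx); [lra | auto].
Qed.

Lemma contingent_opp_interior_zero {p} (K P C : set p) (y v : vec p) :
  is_convex C -> is_cone C -> pointed C -> (forall x, P x -> C x) ->
  minimal_set K C y -> contingent (msum K P) y v ->
  vinterior C (vscal (-1) v) -> v = vzero.
Proof.
  intros Ccv Cco Cpt PC Hmin [h [w [Hh [_ [Hwv Hin]]]]] Hint.
  destruct (interior_eventually_opp C w v Hint Hwv) as [N HN].
  apply (seq_cv_eventually_zero w v Hwv). exists N. intros k Hk.
  destruct (Hin k) as [s [q [Ks [Pq Eq]]]].
  apply (no_cone_descent K C y s q (w k) (h k)); auto.
Qed.

Theorem proposition4p14 (p : nat) (P C K : set p) :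
  good_cone P -> good_cone C ->
  (forall y, P y -> vinterior C y \/ y = vzero) ->
  Kfam C P K ->
  forall y, minimal_set K P y <-> proper_minimal_set K P y.
Proof.
  intros [_ [_ [_ [_ [P0 _]]]]] [_ [Ccv [Cco [Cpt [C0 _]]]]] HPC [_ [_ HK]] y.
  assert (PC : forall x, P x -> C x).
  { intros x Hx.
    destruct (HPC x Hx) as [Hint | ->]; [exact (vinterior_sub C x Hint) | exact C0]. }
  split; [|intros [H _]; exact H].
  intro Hmin. split; [exact Hmin|]. intro v; split.
  -
    intros [Htan HPv].
    destruct (HPC _ HPv) as [Hint | Hzero].
    + exact (contingent_opp_interior_zero K P C y v Ccv Cco Cpt PC
               (proj1 (HK y) Hmin) Htan Hint).
    + replace v with (vscal (-1) (vscal (-1) v)) by (vec_ext; ring).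
      rewrite Hzero. vec_ext; ring.
  -
    intros ->. split.
    + apply contingent_zero. exists y, vzero. refine (conj (proj1 Hmin) (conj P0 _)).
      vec_ext; ring.
    + replace (vscal (-1) (@vzero p)) with (@vzero p); auto. vec_ext; ring.
Qed.
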